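(* Let $a\ge 1$ and $b\ge 0$ be integers, and let $G_{a,b}$ be any cubic graph obtained as follows: take $a$ copies of the $2$-pole $A$ obtained from the Petersen graph by cutting an edge into two dangling edges, and $b$ copies of the $2$-pole $B$ obtained from $K_4$ by cutting an edge into two dangling edges, arrange these $a+b$ $2$-poles in a cyclic order (arbitrary), and for each consecutive pair join one dangling edge of the first to one dangling edge of the next (so each $2$-pole has one dangling edge joined to its predecessor and the other to its successor). Then $$m_3(G_{a,b}) = \frac{4a+2b}{5a+2b}.$$
   Context: For a bridgeless cubic graph $G$, $m_3(G)$ denotes the maximum, over all choices of three perfect matchings $M_1, M_2, M_3$ of $G$, of $|M_1\cup M_2\cup M_3|$, divided by $|E(G)|$. Cutting an edge $uv$ into a pair of dangling edges means deleting $uv$ and attaching one new half-edge (dangling edge) to $u$ and one to $v$; joining two dangling edges means merging them into a single edge between their end vertices. *)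

From mathcomp Require Import all_boot all_order all_algebra.
Set Implicit Arguments. Unset Strict Implicit. Unset Printing Implicit Defensive.
Import Order.TTheory GRing.Theory Num.Theory.

(* A (simple) graph is given by a finite vertex type V and an edge set
   E : {set {set V}} (each edge a 2-element set of vertices). *)

Definition perfect_matching (V : finType) (E M : {set {set V}}) : bool :=
  (M \subset E) && [forall x : V, #|[set e in M | x \in e]| == 1%N].

Definition m3 (V : finType) (E : {set {set V}}) : rat :=
  ((\max_(t : {set {set V}} * {set {set V}} * {set {set V}} |
          [&& perfect_matching E t.1.1, perfect_matching E t.1.2
            & perfect_matching E t.2])
       #|t.1.1 :|: t.1.2 :|: t.2|)%:R / #|E|%:R)%R.

(* Petersen graph: outer 5-cycle 0..4, spokes i -- i+5,
   inner pentagram (i+5) -- ((i+2) mod 5)+5. *)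
Definition petersen_arc (x y : nat) : bool :=
  [|| (x < 5) && (y < 5) && (y == (x + 1) %% 5),
      (x < 5) && (y == x + 5)
    | [&& 5 <= x, x < 10, 5 <= y & y - 5 == (x - 5 + 2) %% 5]].
Definition petersen_adj (x y : nat) : bool := petersen_arc x y || petersen_arc y x.

Definition k4_adj (x y : nat) : bool := [&& x < 4, y < 4 & x != y].

(* block kind: true = Petersen 2-pole A, false = K4 2-pole B *)
Definition bsize (t : bool) : nat := if t then 10 else 4.
Definition badj (t : bool) : nat -> nat -> bool :=
  if t then petersen_adj else k4_adj.

(* n blocks in cyclic order 0,1,...,n-1 (successor = ordS); block i is a
   copy of the base graph of kind k i, in which the edge (u i)(v i) is cut;
   the dangling edge at u i is joined to the predecessor block, the one at
   v i to the successor block:  (i, v i) -- (ordS i, u (ordS i)). *)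
Section Gab.
Variables (n : nat) (k : 'I_n -> bool).
Variables (u v : forall i : 'I_n, 'I_(bsize (k i))).

Definition gvert := {i : 'I_n & 'I_(bsize (k i))}.

Definition ginternal (p q : gvert) : bool :=
  [&& tag p == tag q,
      badj (k (tag p)) (tagged p) (tagged q)
    & ~~ (((tagged p : nat) == u (tag p)) && ((tagged q : nat) == v (tag p))
          || ((tagged p : nat) == v (tag p)) && ((tagged q : nat) == u (tag p)))].

Definition glink (p q : gvert) : bool :=
  [&& (tagged p : nat) == v (tag p), tag q == ordS (tag p)
    & (tagged q : nat) == u (tag q)].

Definition gadj (p q : gvert) : bool := ginternal p q || glink p q || glink q p.

Definition gedges : {set {set gvert}} :=
  [set e : {set gvert} | [exists p : gvert, exists q : gvert, gadj p q && (e == [set p; q])]].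
End Gab.

(* Let M be a perfect matching of G_{a,b}.  Identify, in each block, the cut
   edge with the link leaving the block; then M induces a perfect matching of
   the base graph (Petersen or K4): every vertex other than the end u of the cut
   edge has degree one, and the handshake lemma together with the even order of
   the base graph forces degree one at u as well.  The Petersen graph has
   exactly six perfect matchings, any three of which cover at most 12 of its 15
   edges, while K4 has only 6 edges; hence three perfect matchings of G_{a,b}
   cover at most 12a + 6b of its 15a + 6b edges.  Conversely, for every edge e
   of either base graph there are three perfect matchings covering 12 (resp. 6)
   edges of which only the first contains e; taking e to be the cut edge in
   every block, they glue into three perfect matchings of G_{a,b} attaining
   the bound. *)

From mathcomp Require Import all_boot all_order all_algebra.
From mathcomp Require Import zify.

Set Implicit Arguments.
Unset Strict Implicit.
Unset Printing Implicit Defensive.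
Import GRing.Theory Num.Theory.

Lemma mem_iota0 n j : (j \in iota 0 n) = (j < n).
Proof. by rewrite mem_iota. Qed.

(** * The base graphs *)

Definition base_edges (t : bool) : seq (nat * nat) :=
  if t then [:: (0, 1); (1, 2); (2, 3); (3, 4); (4, 0); (0, 5); (1, 6); (2, 7);
                (3, 8); (4, 9); (5, 7); (6, 8); (7, 9); (8, 5); (9, 6)]
  else [:: (0, 1); (0, 2); (0, 3); (1, 2); (1, 3); (2, 3)].

Definition nedges (t : bool) : nat := size (base_edges t).
Definition endpoints (t : bool) (j : nat) : nat * nat := nth (0, 0) (base_edges t) j.
Definition incident (t : bool) (x j : nat) : bool :=
  (x == (endpoints t j).1) || (x == (endpoints t j).2).
Definition edge_index (t : bool) (x y : nat) : nat :=
  find (fun e => (e == (x, y)) || (e == (y, x))) (base_edges t).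

Lemma base_edges_wf t : all (fun j =>
  [&& (endpoints t j).1 < bsize t, (endpoints t j).2 < bsize t,
      (endpoints t j).1 != (endpoints t j).2,
      badj t (endpoints t j).1 (endpoints t j).2
    & edge_index t (endpoints t j).1 (endpoints t j).2 == j]) (iota 0 (nedges t)).
Proof. by case: t; vm_compute. Qed.

Lemma base_edges_complete t : all (fun x => all (fun y =>
  badj t x y ==> (edge_index t x y < nedges t)) (iota 0 (bsize t))) (iota 0 (bsize t)).
Proof. by case: t; vm_compute. Qed.

Lemma endpointsP t j : j < nedges t ->
  [/\ (endpoints t j).1 < bsize t, (endpoints t j).2 < bsize t,
      (endpoints t j).1 != (endpoints t j).2, badj t (endpoints t j).1 (endpoints t j).2
    & edge_index t (endpoints t j).1 (endpoints t j).2 = j].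
Proof.
move=> hj; have /allP/(_ j) := base_edges_wf t; rewrite mem_iota0 hj => /(_ isT).
by case/and5P => ? ? ? ? /eqP.
Qed.

Lemma edge_index_lt t x y : x < bsize t -> y < bsize t -> badj t x y -> edge_index t x y < nedges t.
Proof.
move=> hx hy; have /allP/(_ x) := base_edges_complete t; rewrite mem_iota0 hx => /(_ isT).
by move/allP/(_ y); rewrite mem_iota0 hy => /(_ isT)/implyP.
Qed.

Lemma edge_indexC t x y : edge_index t x y = edge_index t y x.
Proof. by apply: eq_find => e; rewrite orbC. Qed.

Lemma incident_edge_index t x y z : edge_index t x y < nedges t ->
  incident t z (edge_index t x y) = (z == x) || (z == y).
Proof.
rewrite /nedges -has_find => /(nth_find (0, 0)) /=.
by rewrite /incident /endpoints /edge_index; case/orP => /eqP -> //=; rewrite orbC.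
Qed.

Lemma edge_index_incident t j x y : j < nedges t ->
  incident t x j -> incident t y j -> x != y -> edge_index t x y = j.
Proof.
case/endpointsP => _ _ + _ hj; rewrite /incident.
case: (endpoints t j) hj => a b /= hj hab.
by do 2![case/orP=> /eqP->]; rewrite ?eqxx // edge_indexC.
Qed.

Lemma badj_irr t x : x < bsize t -> ~~ badj t x x.
Proof.
move=> hx; apply/negP => hxx; have hj := edge_index_lt hx hx hxx.
set j := edge_index t x x in hj; have [_ _ + _ _] := endpointsP hj.
have := incident_edge_index (endpoints t j).1 hj.
rewrite /incident eqxx orbb => /esym/eqP ->.
have := incident_edge_index (endpoints t j).2 hj.
by rewrite /incident eqxx orbT orbb => /esym/eqP ->; rewrite eqxx.
Qed.

Definition degree (t : bool) (b : nat -> bool) (x : nat) : nat :=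
  \sum_(0 <= j < nedges t) (b j && incident t x j).

Definition perfect (t : bool) (b : nat -> bool) : bool :=
  all (fun x => degree t b x == 1) (iota 0 (bsize t)).

Definition covered (t : bool) (b1 b2 b3 : nat -> bool) : nat :=
  \sum_(0 <= j < nedges t) [|| b1 j, b2 j | b3 j].

Lemma perfectP t b : reflect (forall x, x < bsize t -> degree t b x = 1) (perfect t b).
Proof.
apply: (iffP allP) => h x; rewrite ?mem_iota0 => hx; last by rewrite h.
by apply/eqP/h; rewrite mem_iota0.
Qed.

Lemma eq_degree t b b' x : (forall j, j < nedges t -> b j = b' j) -> degree t b x = degree t b' x.
Proof. by move=> bb'; apply: eq_big_nat => j /andP [_ hj]; rewrite bb'. Qed.

Lemma eq_perfect t b b' : (forall j, j < nedges t -> b j = b' j) -> perfect t b = perfect t b'.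
Proof. by move=> bb'; apply: eq_all => x; rewrite (eq_degree _ bb'). Qed.

Lemma eq_covered t b1 b2 b3 b1' b2' b3' : (forall j, j < nedges t -> b1 j = b1' j) ->
  (forall j, j < nedges t -> b2 j = b2' j) -> (forall j, j < nedges t -> b3 j = b3' j) ->
  covered t b1 b2 b3 = covered t b1' b2' b3'.
Proof. by move=> h1 h2 h3; apply: eq_big_nat => j /andP [_ hj]; rewrite h1 ?h2 ?h3. Qed.

Lemma sum_nat_pred1 m a (G : nat -> bool) : a < m -> \sum_(0 <= x < m) ((x == a) && G x) = G a.
Proof.
move=> ha; rewrite (eq_bigr (fun x => (x == a) * G a)) => [|x _]; last first.
  by case: (eqVneq x a) => [->|_]; rewrite ?mul1n.
rewrite -big_distrl -big_mkcond sum1_count count_uniq_mem ?iota_uniq //.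
by rewrite mem_iota subn0 ha /= mul1n.
Qed.

Lemma incident_count t j : j < nedges t -> \sum_(0 <= x < bsize t) incident t x j = 2.
Proof.
case/endpointsP; rewrite /incident; case: (endpoints t j) => a c /= ha hc hac _ _.
rewrite (eq_bigr (fun x => ((x == a) && true) + ((x == c) && true))) => [|x _]; last first.
  by rewrite !andbT; case: (x =P a) => [->|]; rewrite ?(negbTE hac).
by rewrite big_split /= !sum_nat_pred1.
Qed.

Lemma handshake t b : \sum_(0 <= x < bsize t) degree t b x = 2 * \sum_(0 <= j < nedges t) b j.
Proof.
rewrite /degree exchange_big_nat big_distrr /=; apply: eq_big_nat => j /andP [_ hj].
rewrite (eq_bigr (fun x => b j * incident t x j)) => [|x _]; last by rewrite mulnb.
by rewrite -big_distrr /= incident_count // mulnC.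
Qed.

Definition in_matching (t : bool) (m : seq (nat * nat)) (j : nat) : bool := endpoints t j \in m.

Definition base_matchings (t : bool) : seq (seq (nat * nat)) :=
  if t then
    [:: [:: (0, 1); (2, 3); (4, 9); (5, 7); (6, 8)]; [:: (0, 1); (3, 4); (2, 7); (8, 5); (9, 6)];
        [:: (1, 2); (3, 4); (0, 5); (6, 8); (7, 9)]; [:: (1, 2); (4, 0); (3, 8); (5, 7); (9, 6)];
        [:: (2, 3); (4, 0); (1, 6); (7, 9); (8, 5)]; [:: (0, 5); (1, 6); (2, 7); (3, 8); (4, 9)]]
  else [:: [:: (0, 1); (2, 3)]; [:: (0, 2); (1, 3)]; [:: (0, 3); (1, 2)]].

Fixpoint bit_lists (m : nat) : seq (seq bool) :=
  if m is m'.+1 then [seq x :: l | x <- [:: true; false], l <- bit_lists m'] else [:: [::]].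

Lemma bit_listsP l : l \in bit_lists (size l).
Proof.
elim: l => [|x l IH] //=; rewrite mem_cat.
by case: x; apply/orP; [left|right]; rewrite ?cats0 mem_map // => ? ? [].
Qed.

Lemma petersen_matchings_complete : all (fun l =>
  has (fun m => all (fun j => nth false l j == in_matching true m j) (iota 0 15))
    (base_matchings true)) [seq l <- bit_lists 15 | perfect true (nth false l)].
Proof. by rewrite /perfect /degree unlock; vm_compute. Qed.

Lemma petersen_three_cover : all (fun m1 => all (fun m2 => all (fun m3 =>
  covered true (in_matching true m1) (in_matching true m2) (in_matching true m3) <= 12)
  (base_matchings true)) (base_matchings true)) (base_matchings true).
Proof. by rewrite /covered unlock; vm_compute. Qed.

Lemma perfect_petersen_listed b : perfect true b ->
  exists2 m, m \in base_matchings true & forall j, j < nedges true -> b j = in_matching true m j.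
Proof.
move=> pb; have l15 : mkseq b 15 \in bit_lists 15.
  by have := bit_listsP (mkseq b 15); rewrite size_mkseq.
have pl : perfect true (nth false (mkseq b 15)).
  by rewrite (@eq_perfect _ _ b) // => j hj; rewrite nth_mkseq.
have /allP/(_ (mkseq b 15)) := petersen_matchings_complete.
rewrite mem_filter pl l15 => /(_ isT)/hasP [m hm /allP agree].
by exists m => // j hj; have := agree j; rewrite mem_iota0 hj nth_mkseq // => /(_ isT)/eqP.
Qed.

Definition cover_bound (t : bool) : nat := if t then 12 else 6.

Lemma covered_le t b1 b2 b3 : perfect t b1 -> perfect t b2 -> perfect t b3 ->
  covered t b1 b2 b3 <= cover_bound t.
Proof.
case: t => [p1 p2 p3|_ _ _].
  have [m1 h1 e1] := perfect_petersen_listed p1.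
  have [m2 h2 e2] := perfect_petersen_listed p2.
  have [m3 h3 e3] := perfect_petersen_listed p3.
  rewrite (eq_covered e1 e2 e3).
  by have /allP/(_ m1 h1)/allP/(_ m2 h2)/allP/(_ m3 h3) := petersen_three_cover.
apply: (@leq_trans (\sum_(0 <= j < nedges false) 1)); last by rewrite sum_nat_const_nat.
by apply: leq_sum => j _; apply: leq_b1.
Qed.

(* Only the first matching contains the cut edge, so the choices made in
   consecutive blocks agree on the link between them. *)
Definition witness_lists (t : bool) (J : nat) : seq (seq (nat * nat)) :=
  take 1 [seq m <- base_matchings t | endpoints t J \in m] ++
  take 2 [seq m <- base_matchings t | endpoints t J \notin m].

Definition witness (t : bool) (J r : nat) : nat -> bool :=
  in_matching t (nth [::] (witness_lists t J) r).

Lemma witness_check t : all (fun J =>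
  all (fun r => perfect t (witness t J r) && (witness t J r J == (r == 0))) (iota 0 3) &&
  (covered t (witness t J 0) (witness t J 1) (witness t J 2) == cover_bound t))
  (iota 0 (nedges t)).
Proof. by rewrite /perfect /degree /covered unlock; case: t; vm_compute. Qed.

Lemma witnessP t J : J < nedges t ->
  [/\ forall r, r < 3 -> perfect t (witness t J r),
      forall r, r < 3 -> witness t J r J = (r == 0)
    & covered t (witness t J 0) (witness t J 1) (witness t J 2) = cover_bound t].
Proof.
move=> hJ; have /allP/(_ J) := witness_check t; rewrite mem_iota0 hJ => /(_ isT).
case/andP => /allP hr /eqP; split=> // r ltr3; have := hr r; rewrite mem_iota0 ltr3.
  by case/(_ isT)/andP.
by case/(_ isT)/andP => _ /eqP.
Qed.

(** * A block with its cut edge *)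

(* The cut edge J joins U and V; [b J] records the link leaving V and [c] the
   link entering U. *)
Definition cut_degree (t : bool) (J U V : nat) (b : nat -> bool) (c : bool) (x : nat) : nat :=
  \sum_(0 <= j < nedges t) (b j && (if j == J then x == V else incident t x j)) + ((x == U) && c).

Lemma eq_cut_degree t J U V b b' c x : (forall j, j < nedges t -> b j = b' j) ->
  cut_degree t J U V b c x = cut_degree t J U V b' c x.
Proof. by move=> bb'; congr (_ + _); apply: eq_big_nat => j /andP [_ hj]; rewrite bb'. Qed.

Section CutEdge.

Variables (t : bool) (J U V : nat) (b : nat -> bool) (c : bool).
Hypotheses (hJ : J < nedges t) (hUV : U != V).
Hypothesis incident_J : forall x, incident t x J = (x == U) || (x == V).

Lemma cut_degree_neq x : x != U -> cut_degree t J U V b c x = degree t b x.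
Proof.
move=> hx; rewrite /cut_degree (negbTE hx) addn0; apply: eq_bigr => j _.
by case: eqP => // ->; rewrite incident_J (negbTE hx).
Qed.

Lemma cut_degree_U : cut_degree t J U V b c U + b J = degree t b U + c.
Proof.
have hJi : J \in index_iota 0 (nedges t) by rewrite mem_index_iota.
rewrite /cut_degree /degree !(bigD1_seq J hJi (iota_uniq _ _)) /= eqxx (negbTE hUV).
rewrite incident_J eqxx andbT andbF.
by rewrite (eq_bigr (fun j => b j && incident t U j : nat)) => [|j /negbTE ->] //; lia.
Qed.

Lemma cut_degree_consistent : c = b J -> forall x, cut_degree t J U V b c x = degree t b x.
Proof.
move=> cbJ x; case: (eqVneq x U) => [->|]; last exact: cut_degree_neq.
by apply/eqP; rewrite -(eqn_add2r (b J)) cut_degree_U cbJ.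
Qed.

(* The handshake lemma and the even order of the base graph make the degree
   at U odd, which rules out the inconsistent choices of c. *)
Lemma perfect_of_cut_degree : U < bsize t ->
  (forall x, x < bsize t -> cut_degree t J U V b c x = 1) -> perfect t b.
Proof.
move=> hU deg1; have degx x : x < bsize t -> x != U -> degree t b x = 1.
  by move=> hx hxU; rewrite -cut_degree_neq ?deg1.
apply/perfectP => x hx; case: (eqVneq x U) => [->|]; last exact: degx.
have hs := handshake t b; rewrite big_mkord (bigD1 (Ordinal hU)) //= in hs.
rewrite (eq_bigr (fun _ => 1)) ?sum1_card ?cardC1 ?card_ord in hs; last first.
  by move=> y hy; apply: degx => //; apply: contra hy => /eqP hyU; apply/eqP/val_inj.
have hdU := cut_degree_U; rewrite deg1 // in hdU.
have hb : bsize t = 10 \/ bsize t = 4 by case: (t); [left|right].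
by move: hs hdU; case: (b J); case: (c) => /=; lia.
Qed.

End CutEdge.

(** * Gluing the blocks into a ring *)

Lemma sum_pred1_mul (I : finType) (i0 : I) (F : I -> nat) : \sum_i (i == i0) * F i = F i0.
Proof. by rewrite (bigD1 i0) //= eqxx mul1n big1 ?addn0 // => i /negbTE ->. Qed.

Section Gluing.

Variables (n : nat) (k : 'I_n -> bool) (u v : forall i : 'I_n, 'I_(bsize (k i))).
Hypothesis huv : forall i, badj (k i) (u i) (v i).

Local Notation vertex := (gvert k).
Local Notation E := (gedges u v).

Definition vtx (i : 'I_n) (y : nat) : vertex :=
  Tagged (fun i => 'I_(bsize (k i))) (insubd (u i) y).

Lemma vertex_eq (p q : vertex) : (p == q) = (tag p == tag q) && (tagged p == tagged q :> nat).
Proof.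
apply/eqP/andP => [-> //|[/eqP + /eqP]]; case: p q => [i x] [i' y] /= ei.
by subst i' => /val_inj ->.
Qed.

Lemma vtx_eq p i y : y < bsize (k i) -> (p == vtx i y) = (tag p == i) && (tagged p == y :> nat).
Proof. by move=> hy; rewrite vertex_eq /= val_insubd hy. Qed.

Lemma tagged_vtx i y : y < bsize (k i) -> tagged (vtx i y) = y :> nat.
Proof. by move=> hy; rewrite /= val_insubd hy. Qed.

Definition cut (i : 'I_n) : nat := edge_index (k i) (u i) (v i).

Lemma cut_lt i : cut i < nedges (k i).
Proof. exact: edge_index_lt (ltn_ord _) (ltn_ord _) (huv i). Qed.

Lemma incident_cut i x : incident (k i) x (cut i) = (x == u i) || (x == v i).
Proof. exact: incident_edge_index (cut_lt i). Qed.

Lemma u_neq_v i : u i != v i :> nat.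
Proof. by apply: contraTneq (huv i) => ->; apply: badj_irr. Qed.

(* The cut edge of block i stands for the link from its end v i to the next block. *)
Definition block_edge (i : 'I_n) (j : nat) : {set vertex} :=
  if j == cut i then [set vtx i (v i); vtx (ordS i) (u (ordS i))]
  else [set vtx i (endpoints (k i) j).1; vtx i (endpoints (k i) j).2].

Lemma mem_block_edge p i j : j < nedges (k i) -> (p \in block_edge i j) =
  if j == cut i then
    (tag p == i) && (tagged p == v i :> nat) || (tag p == ordS i) && (tagged p == u (ordS i) :> nat)
  else (tag p == i) && incident (k i) (tagged p) j.
Proof.
move=> hj; rewrite /block_edge; case: ifP => _; rewrite in_set2; first by rewrite !vtx_eq ?ltn_ord.
by case/endpointsP: hj => ha hc _ _ _; rewrite !vtx_eq // -andb_orr.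
Qed.

Definition edge_label : finType := {i : 'I_n & 'I_(nedges (k i))}.

Definition label i j (hj : j < nedges (k i)) : edge_label :=
  Tagged (fun i => 'I_(nedges (k i))) (Ordinal hj).

Definition label_edge (s : edge_label) : {set vertex} := block_edge (tag s) (tagged s).

Lemma label_edge_in s : label_edge s \in E.
Proof.
case: s => i [j hj]; rewrite /label_edge /block_edge inE /=; case: ifP => hcut.
  apply/existsP; exists (vtx i (v i)); apply/existsP; exists (vtx (ordS i) (u (ordS i))).
  by rewrite eqxx andbT /gadj /glink /= !val_insubd !ltn_ord !eqxx orbT.
case/endpointsP: (hj) => + + _; case: (endpoints _ _) => a c /= ha hc hadj hidx.
apply/existsP; exists (vtx i a); apply/existsP; exists (vtx i c).
rewrite eqxx andbT /gadj /ginternal /= !val_insubd ha hc eqxx hadj /=.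
apply/orP; left; apply/orP; left; apply/negP => /orP [] /andP [/eqP ea /eqP ec].
  by move: hcut; rewrite -hidx ea ec eqxx.
by move: hcut; rewrite -hidx ea ec edge_indexC eqxx.
Qed.

Lemma label_edge_onto e : e \in E -> exists s, e = label_edge s.
Proof.
rewrite inE => /existsP [p /existsP [q /andP [+ /eqP ->]]].
case: p q => [i x] [i' y]; case/orP => [/orP [|]|].
- case/and3P => /= /eqP ei; subst i' => hxy hcut.
  have hj := edge_index_lt (ltn_ord x) (ltn_ord y) hxy.
  have hnc : edge_index (k i) x y != cut i.
    apply: contra hcut => /eqP hc; have : x != y :> nat.
      by apply: contraTneq hxy => ->; apply: badj_irr.
    have := incident_edge_index x hj; have := incident_edge_index y hj.
    rewrite hc !incident_cut !eqxx orbT /=.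
    by do 2![case/orP => /eqP ->]; rewrite ?eqxx ?orbT.
  exists (label hj); apply/setP => p.
  by rewrite mem_block_edge //= (negbTE hnc) in_set2 !vertex_eq /= incident_edge_index // -andb_orr.
- case/and3P => /= hx /eqP ei hy; subst i'; exists (label (cut_lt i)); apply/setP => p.
  by rewrite mem_block_edge ?cut_lt //= eqxx in_set2 !vertex_eq /= (eqP hx) (eqP hy).
- case/and3P => /= hy /eqP ei hx; subst i; exists (label (cut_lt i')); apply/setP => p.
  by rewrite mem_block_edge ?cut_lt //= eqxx in_set2 !vertex_eq /= (eqP hx) (eqP hy) orbC.
Qed.

Lemma link_neq_internal i i' j : j < nedges (k i') -> j != cut i' ->
  block_edge i (cut i) != block_edge i' j.
Proof.
move=> hj hcut; apply/negP => /eqP e.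
have mem p : (p \in block_edge i (cut i)) = (p \in block_edge i' j) by rewrite e.
have := mem (vtx i (v i)); have := mem (vtx (ordS i) (u (ordS i))).
rewrite !mem_block_edge ?cut_lt // eqxx (negbTE hcut) /= !tagged_vtx ?ltn_ord // !eqxx orbT /=.
move=> + /esym/andP [/eqP ei hv]; subst i' => /esym/andP [/eqP es hu]; rewrite es in hu.
by move: hcut; rewrite -(edge_index_incident hj hu hv (u_neq_v i)) eqxx.
Qed.

Lemma block_edge_inj i1 j1 i2 j2 : j1 < nedges (k i1) -> j2 < nedges (k i2) ->
  block_edge i1 j1 = block_edge i2 j2 -> i1 = i2 /\ j1 = j2.
Proof.
move=> h1 h2 e; have mem p : (p \in block_edge i1 j1) = (p \in block_edge i2 j2) by rewrite e.
case: (eqVneq j1 (cut i1)) => c1; case: (eqVneq j2 (cut i2)) => c2.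
- have := mem (vtx i1 (v i1)); rewrite !mem_block_edge // c1 c2 /= tagged_vtx ?ltn_ord // !eqxx.
  case/esym/orP => /andP [/eqP ei hv]; first by subst i2.
  by subst i1; case/eqP: (u_neq_v (ordS i2)); apply/esym/eqP.
- by subst j1; case/eqP: (link_neq_internal i1 h2 c2).
- by subst j2; case/eqP: (link_neq_internal i2 h1 c1); rewrite e.
case/endpointsP: (h1) => + + hac _ hj1; case: (endpoints _ _) hac hj1 => a c /= hac hj1 ha hc.
have := mem (vtx i1 a); have := mem (vtx i1 c).
rewrite !mem_block_edge // (negbTE c1) (negbTE c2) /= !tagged_vtx // -hj1.
rewrite !incident_edge_index ?hj1 // !eqxx orbT /=.
move=> /esym/andP [/eqP ei hc2] /esym/andP [_ ha2]; subst i2; split=> //.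
by rewrite -(edge_index_incident h2 ha2 hc2 hac).
Qed.

Lemma label_edge_inj : injective label_edge.
Proof.
move=> [i1 j1] [i2 j2] /(block_edge_inj (ltn_ord _) (ltn_ord _)) /= [ei ej]; subst i2.
by congr Tagged; apply: val_inj.
Qed.

Definition restrict (M : {set {set vertex}}) (i : 'I_n) (j : nat) : bool := block_edge i j \in M.

Lemma card_subset_gedges (M : {set {set vertex}}) : M \subset E ->
  #|M| = \sum_(i < n) \sum_(0 <= j < nedges (k i)) restrict M i j.
Proof.
move=> sME; have -> : #|M| = #|label_edge @^-1: M|.
  rewrite -(card_imset _ label_edge_inj); apply: eq_card => e.
  apply/idP/imsetP => [he|[s]]; last by rewrite inE => ? ->.
  by have [s es] := label_edge_onto (subsetP sME e he); exists s; rewrite ?inE -es.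
rewrite -sum1_card big_mkcond /=.
rewrite (eq_bigr (fun i => \sum_(j < nedges (k i)) (restrict M i j : nat))) => [|i _]; last first.
  by rewrite big_mkord.
rewrite (sig_big_dep xpredT (fun _ => xpredT)
  (fun i (j : 'I_(nedges (k i))) => restrict M i j : nat)) /=.
by apply: eq_bigr => s _; rewrite inE.
Qed.

Lemma card_gedges : #|E| = \sum_(i < n) nedges (k i).
Proof.
rewrite card_subset_gedges //; apply: eq_bigr => i _.
rewrite (@eq_big_nat _ _ _ 0 _ _ (fun=> 1)) => [|j /andP [_ hj]]; last first.
  by rewrite /restrict (label_edge_in (label hj)).
by rewrite sum_nat_const_nat subn0 muln1.
Qed.

Lemma ord_pred_eq (i i' : 'I_n) : (i' == ord_pred i) = (ordS i' == i).
Proof. by rewrite -(can_eq (@ordSK n)) ord_predK. Qed.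

Lemma incidence_term (M : {set {set vertex}}) i' j i (x : 'I_(bsize (k i))) :
  j < nedges (k i') ->
  (restrict M i' j && (Tagged (fun i => 'I_(bsize (k i))) x \in block_edge i' j) : nat) =
  (i' == i) *
    (restrict M i' j && (if j == cut i' then x == v i' :> nat else incident (k i') x j))
  + (i' == ord_pred i) * ((j == cut i') && ((x == u i :> nat) && restrict M i' j)).
Proof.
move=> hj; rewrite mem_block_edge //= ord_pred_eq [i == ordS i']eq_sym.
case: (eqVneq i' i) => [ei|ne]; first subst i'.
  rewrite mul1n /=; case: ifP => hc; last by rewrite /= muln0 addn0.
  case: (eqVneq (ordS i) i) => [es|ns]; last by rewrite /= orbF addn0.
  have -> : u (ordS i) = u i :> nat by rewrite es.
  have := u_neq_v i; rewrite eq_sym => /negbTE nvu.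
  case: (restrict M i j); case: (x =P v i :> nat) => [->|_];
    by rewrite /= ?nvu ?mul1n ?andbT ?andbF.
rewrite /= mul0n add0n; case: (eqVneq (ordS i') i) => [es|_]; last by rewrite /= if_same andbF.
by subst i; rewrite mul1n; case: ifP => _; rewrite /= ?andbF // andbC.
Qed.

Lemma card_incident (M : {set {set vertex}}) i (x : 'I_(bsize (k i))) : M \subset E ->
  #|[set e in M | Tagged (fun i => 'I_(bsize (k i))) x \in e]| =
  cut_degree (k i) (cut i) (u i) (v i)
    (restrict M i) (restrict M (ord_pred i) (cut (ord_pred i))) x.
Proof.
move=> sME; rewrite card_subset_gedges; last first.
  by apply: subset_trans sME; apply/subsetP => e; rewrite inE => /andP [].
pose X i' := \sum_(0 <= j < nedges (k i'))
  (restrict M i' j && (if j == cut i' then x == v i' :> nat else incident (k i') x j)).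
pose Y i' := \sum_(0 <= j < nedges (k i'))
  ((j == cut i') && ((x == u i :> nat) && restrict M i' j)).
rewrite (eq_bigr (fun i' => (i' == i) * X i' + (i' == ord_pred i) * Y i')) => [|i' _]; last first.
  rewrite !big_distrr -big_split; apply: eq_big_nat => j /andP [_ hj].
  by rewrite /= -incidence_term // /restrict inE.
by rewrite big_split /= !sum_pred1_mul /Y sum_nat_pred1 ?cut_lt.
Qed.

Lemma restrict_perfect M i : perfect_matching E M -> perfect (k i) (restrict M i).
Proof.
case/andP => sME /forallP deg1.
apply: (perfect_of_cut_degree (c := restrict M (ord_pred i) (cut (ord_pred i)))
  (cut_lt i) (u_neq_v i) (incident_cut i) (ltn_ord (u i))) => x hx.
by have /eqP := deg1 (Tagged _ (Ordinal hx)); rewrite card_incident.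
Qed.

Lemma card_union3 (M1 M2 M3 : {set {set vertex}}) :
  M1 \subset E -> M2 \subset E -> M3 \subset E ->
  #|M1 :|: M2 :|: M3| =
  \sum_(i < n) covered (k i) (restrict M1 i) (restrict M2 i) (restrict M3 i).
Proof.
move=> s1 s2 s3; rewrite card_subset_gedges ?subUset ?s1 ?s2 ?s3 //.
by apply: eq_bigr => i _; apply: eq_bigr => j _; rewrite /restrict !inE orbA.
Qed.

Lemma card_union_le M1 M2 M3 :
  perfect_matching E M1 -> perfect_matching E M2 -> perfect_matching E M3 ->
  #|M1 :|: M2 :|: M3| <= \sum_(i < n) cover_bound (k i).
Proof.
have sub M : perfect_matching E M -> M \subset E by case/andP.
move=> p1 p2 p3; rewrite card_union3 ?sub //.
by apply: leq_sum => i _; apply: covered_le; apply: restrict_perfect.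
Qed.

Definition glue (loc : 'I_n -> nat -> bool) : {set {set vertex}} :=
  label_edge @: [set s : edge_label | loc (tag s) (tagged s)].

Lemma glue_sub loc : glue loc \subset E.
Proof. by apply/subsetP => _ /imsetP [s _ ->]; apply: label_edge_in. Qed.

Lemma restrict_glue loc i j : j < nedges (k i) -> restrict (glue loc) i j = loc i j.
Proof.
move=> hj; rewrite /restrict -[block_edge i j]/(label_edge (label hj)).
by rewrite mem_imset ?inE //; apply: label_edge_inj.
Qed.

Lemma glue_perfect_matching loc c : (forall i, perfect (k i) (loc i)) ->
  (forall i, loc i (cut i) = c) -> perfect_matching E (glue loc).
Proof.
move=> ploc cloc; apply/andP; split; first exact: glue_sub.
apply/forallP => -[i x]; rewrite card_incident ?glue_sub // restrict_glue ?cut_lt //.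
rewrite (@eq_cut_degree _ _ _ _ _ (loc i)) => [|j hj]; last exact: restrict_glue.
rewrite cloc -(cloc i) (cut_degree_consistent (cut_lt i) (u_neq_v i) (incident_cut i)) //.
by rewrite (perfectP _ _ (ploc i)).
Qed.

Lemma m3_gedges :
  m3 E = ((\sum_(i < n) cover_bound (k i))%:R / (\sum_(i < n) nedges (k i))%:R)%R.
Proof.
rewrite /m3 card_gedges; congr (_%:R / _)%R; apply/eqP; rewrite eqn_leq; apply/andP; split.
  by apply/bigmax_leqP => -[[M1 M2] M3] /and3P []; apply: card_union_le.
pose W r := glue (fun i => witness (k i) (cut i) r).
have pmW r : r < 3 -> perfect_matching E (W r).
  move=> hr; apply: (glue_perfect_matching (c := r == 0)) => i.
    by case: (witnessP (cut_lt i)) => + _ _; apply.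
  by case: (witnessP (cut_lt i)) => _ + _; apply.
have <- : #|W 0 :|: W 1 :|: W 2| = \sum_(i < n) cover_bound (k i).
  rewrite card_union3 ?glue_sub //; apply: eq_bigr => i _.
  rewrite (eq_covered (@restrict_glue _ i) (@restrict_glue _ i) (@restrict_glue _ i)).
  by case: (witnessP (cut_lt i)).
by apply: (leq_bigmax_cond ((W 0, W 1), W 2)); rewrite /= !pmW.
Qed.

End Gluing.

Lemma sum_over_kinds (I : finType) (k : I -> bool) (f : bool -> nat) :
  \sum_i f (k i) = f true * #|[set i | k i]| + f false * (#|I| - #|[set i | k i]|).
Proof.
rewrite (bigID k) /= mulnC [f false * _]mulnC -!sum_nat_cond_const; congr (_ + _).
  by apply: eq_bigr => i ->.
rewrite -(cardsC [set i | k i]) addKn (eq_bigr (fun=> f false)) => [|i /negbTE ->] //.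
by rewrite !sum_nat_cond_const; congr (_ * _); apply: eq_card => i; rewrite !inE.
Qed.

Theorem lemma3 (a b : nat) (ha : (1 <= a)%N) (k : 'I_(a + b) -> bool)
  (hk : #|[set i | k i]| = a)
  (u v : forall i : 'I_(a + b), 'I_(bsize (k i)))
  (huv : forall i, badj (k i) (u i) (v i)) :
  m3 (gedges u v) = ((4 * a + 2 * b)%:R / (5 * a + 2 * b)%:R)%R.
Proof.
rewrite m3_gedges // !sum_over_kinds hk card_ord addKn /=.
have -> : 12 * a + 6 * b = 3 * (4 * a + 2 * b) by lia.
have -> : 15 * a + 6 * b = 3 * (5 * a + 2 * b) by lia.
by rewrite !natrM -mulf_div divff ?mul1r // pnatr_eq0.
Qed.
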